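(* Let $q\le p$, $\tau^2>0$, $c>1$, let $H\in\mathbb{R}^{q\times p}$ have full rank $q$, let $\Sigma\in\mathbb{R}^{q\times q}$ be symmetric positive definite, and let $\lambda_1^{\Psi},\dots,\lambda_q^{\Psi}$ be the eigenvalues of $\Psi=\Sigma^{-1/2}HH^T\Sigma^{-1/2}$. If $$\sum_{i=1}^{q}\frac{1}{\left(1+(\tau^2\lambda_i^{\Psi})^{-1}\right)^2}>\frac{q}{c},$$ then $$(\sqrt{c}-1)\,\tau^2>\frac{1}{\max_{1\le i\le q}\lambda_i^{\Psi}}.$$
   Context: $\Sigma^{-1/2}$ is the symmetric positive definite inverse square root of $\Sigma$; $\Psi$ is symmetric positive definite, so all $\lambda_i^{\Psi}>0$. *)

From mathcomp Require Import all_boot all_order all_algebra.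
Set Implicit Arguments. Unset Strict Implicit. Unset Printing Implicit Defensive.
Import Order.TTheory GRing.Theory Num.Theory.
Local Open Scope ring_scope.

Definition symmetric_mx (R : ringType) (n : nat) (A : 'M[R]_n) : Prop := A^T = A.

Definition posdef_mx (R : numDomainType) (n : nat) (A : 'M[R]_n) : Prop :=
  symmetric_mx A /\ forall v : 'cV[R]_n, v != 0 -> 0 < (v^T *m A *m v) 0 0.

Definition eigenvalues_of (R : comRingType) (n : nat) (A : 'M[R]_n) (lam : 'I_n -> R) : Prop :=
  char_poly A = \prod_(i < n) ('X - (lam i)%:P).

From mathcomp Require Import all_boot all_order all_algebra.
From mathcomp Require Import lra.
Set Implicit Arguments.
Unset Strict Implicit.
Unset Printing Implicit Defensive.
Import Order.TTheory GRing.Theory Num.Theory.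
Local Open Scope ring_scope.

(* Only the positive definiteness of S = Sigma^(-1/2) and the full row rank of H
   matter.  Then Psi = S H H^T S is positive definite, as w^T Psi w is the squared
   norm of the row w^T S H, so every lambda_i is positive.  The shrinkage factor
   f(x) = 1 / (1 + (tau2 x)^-1)^2 is nondecreasing for x > 0, hence
   q / c < sum_i f(lambda_i) <= q f(lambda_max), i.e. (1 + a)^2 < c with
   a = 1 / (tau2 lambda_max); taking square roots gives a < sqrt c - 1. *)

Lemma row_mulmx_trmx_gt0 (R : realDomainType) (n : nat) (y : 'rV[R]_n) :
  y != 0 -> 0 < (y *m y^T) 0 0.
Proof.
have term_ge0 j : predT j -> 0 <= y 0 j * y^T j 0 by rewrite mxE -expr2 sqr_ge0.
move=> y_neq0; rewrite mxE lt0r sumr_ge0 ?andbT //; apply: contra y_neq0 => /eqP y2_0.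
apply/eqP/matrixP => i j; rewrite (ord1 i) [RHS]mxE.
have /eqP := psumr_eq0P term_ge0 y2_0 (isT : predT j).
by rewrite mxE mulf_eq0 orbb => /eqP.
Qed.

Lemma posdef_conj_gram (R : realFieldType) (q p : nat)
    (S : 'M[R]_q) (H : 'M[R]_(q, p)) :
  posdef_mx S -> row_free H -> posdef_mx (S *m H *m H^T *m S).
Proof.
move=> [S_sym S_pd] H_free; split.
  by rewrite /symmetric_mx !trmx_mul trmxK S_sym !mulmxA.
move=> w w_neq0.
have -> : w^T *m (S *m H *m H^T *m S) *m w = (w^T *m S *m H) *m (w^T *m S *m H)^T.
  by rewrite !trmx_mul trmxK S_sym !mulmxA.
apply: row_mulmx_trmx_gt0; apply: contraTneq (S_pd w w_neq0) => wSH0.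
have -> : w^T *m S = 0 by apply: (row_free_inj H_free); rewrite wSH0 mul0mx.
by rewrite mul0mx mxE ltxx.
Qed.

Lemma eigenvalues_ofP (F : fieldType) (n : nat) (A : 'M[F]_n) (lam : 'I_n -> F) :
  eigenvalues_of A lam -> forall i, eigenvalue A (lam i).
Proof.
move=> eig i; rewrite eigenvalue_root_char eig; apply/rootP.
rewrite horner_prod; apply/eqP; rewrite prodf_seq_eq0; apply/hasP.
by exists i; rewrite ?mem_index_enum //= !hornerE subrr.
Qed.

Lemma posdef_eigenvalue_gt0 (R : realFieldType) (n : nat) (A : 'M[R]_n) (a : R) :
  posdef_mx A -> eigenvalue A a -> 0 < a.
Proof.
move=> [_ A_pd] /eigenvalueP [v vA v_neq0].
have := A_pd v^T; rewrite trmx_eq0 trmxK vA -scalemxAl mxE => /(_ v_neq0).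
by rewrite pmulr_lgt0 // row_mulmx_trmx_gt0.
Qed.

Definition shrinkage {R : fieldType} (tau2 x : R) : R := 1 / (1 + (tau2 * x)^-1) ^+ 2.

Lemma shrinkage_le (R : realFieldType) (tau2 x y : R) :
  0 < tau2 -> 0 < x -> x <= y -> shrinkage tau2 x <= shrinkage tau2 y.
Proof.
move=> tau2_gt0 x_gt0 le_xy; have y_gt0 := lt_le_trans x_gt0 le_xy.
have inv_le : (tau2 * y)^-1 <= (tau2 * x)^-1.
  by rewrite lef_pV2 ?posrE ?mulr_gt0 // ler_pM2l.
have ix_gt0 : 0 < (tau2 * x)^-1 by rewrite invr_gt0 mulr_gt0.
have iy_gt0 : 0 < (tau2 * y)^-1 by rewrite invr_gt0 mulr_gt0.
rewrite /shrinkage !div1r lef_pV2 ?posrE ?exprn_gt0 ?addr_gt0 //.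
by rewrite ler_pXn2r // ?nnegrE ?addr_ge0 ?(ltW ix_gt0) ?(ltW iy_gt0) // lerD2l.
Qed.

Lemma sum_shrinkage_le_max (R : realFieldType) (q : nat) (tau2 : R) (lam : 'I_q -> R) :
  0 < tau2 -> (forall i, 0 < lam i) ->
  \sum_(i < q) shrinkage tau2 (lam i)
    <= shrinkage tau2 (\big[Num.max/0]_(i < q) lam i) *+ q.
Proof.
move=> tau2_gt0 lam_gt0; rewrite -[X in _ *+ X]card_ord -sumr_const.
by apply: ler_sum => i _; apply: shrinkage_le; rewrite ?le_bigmax.
Qed.

Lemma inv_lt_shrinkage (R : rcfType) (tau2 c x : R) :
  0 < tau2 -> 0 < c -> 0 < x -> c^-1 < shrinkage tau2 x ->
  1 / x < (Num.sqrt c - 1) * tau2.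
Proof.
move=> tau2_gt0 c_gt0 x_gt0.
have a_gt0 : 0 < (tau2 * x)^-1 by rewrite invr_gt0 mulr_gt0.
rewrite /shrinkage div1r ltf_pV2 ?posrE ?exprn_gt0 ?addr_gt0 // => sq_lt_c.
set a := (tau2 * x)^-1 in a_gt0 sq_lt_c *.
have lt_a_sqrtc : 1 + a < Num.sqrt c.
  by rewrite -[1 + a]ger0_norm ?addr_ge0 ?ltW // -sqrtr_sqr ltr_sqrt.
have -> : 1 / x = a * tau2 by rewrite /a invfM mulrAC mulVf ?gt_eqF.
by rewrite (ltr_pM2r tau2_gt0); lra.
Qed.

Theorem proposition3p4 (R : rcfType) (q p : nat) (tau2 c : R)
    (H : 'M[R]_(q, p)) (Sigma Sinvhalf : 'M[R]_q) (lam : 'I_q -> R) :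
  (q <= p)%N ->
  0 < tau2 ->
  1 < c ->
  \rank H = q ->
  posdef_mx Sigma ->
  posdef_mx Sinvhalf -> Sinvhalf *m Sinvhalf = invmx Sigma ->
  eigenvalues_of (Sinvhalf *m H *m H^T *m Sinvhalf) lam ->
  \sum_(i < q) 1 / (1 + (tau2 * lam i)^-1) ^+ 2 > q%:R / c ->
  (Num.sqrt c - 1) * tau2 > 1 / \big[Num.max/0]_(i < q) lam i.
Proof.
move=> _ tau2_gt0 c_gt1 rkH _ S_pd _ eig sum_gt.
have c_gt0 : 0 < c by apply: lt_trans c_gt1.
have lam_gt0 i : 0 < lam i.
  apply: posdef_eigenvalue_gt0 (eigenvalues_ofP eig i).
  by apply: posdef_conj_gram; rewrite // -row_leq_rank rkH.
have := lt_le_trans sum_gt (sum_shrinkage_le_max tau2_gt0 lam_gt0).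
rewrite [_ / c]mulrC mulr_natr ltrMn2r => /andP [q_gt0 inv_c_lt].
apply: inv_lt_shrinkage => //.
exact: lt_le_trans (lam_gt0 (Ordinal q_gt0)) (le_bigmax _ _ _).
Qed.
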